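(* The contravariant functor $\partial\mathrm{Spec}\colon\mathsf{Ring}\to\mathsf{Set}$ is naturally isomorphic to the contravariant functor $R\mapsto \varprojlim_{C\in\mathcal{C}(R)^{\mathrm{op}}}\operatorname{Spec}(C)$, and this isomorphism is compatible with the identification $\partial\mathrm{Spec}|_{\mathsf{CommRing}}=\operatorname{Spec}$.
   Context: Rings are unital and homomorphisms unital. For a ring $R$, a subset $I\subseteq R$ is a partial ideal if for all commuting $a,b\in R$: $a,b\in I\Rightarrow a+b\in I$, and $b\in I\Rightarrow ab\in I$; it is prime if $I\neq R$ and for commuting $x,y$, $xy\in I$ implies $x\in I$ or $y\in I$. $\partial\mathrm{Spec}(R)$ is the set of prime partial ideals of $R$, with $\partial\mathrm{Spec}(f)(P)=f^{-1}(P)$ for a homomorphism $f$. $\mathcal{C}(R)$ is the poset of commutative subrings of $R$ under inclusion, viewed as a category; the limit is of the diagram sending $C$ to $\operatorname{Spec}(C)$ and an inclusion $C\subseteq C'$ to the map $\operatorname{Spec}(C')\to\operatorname{Spec}(C)$, $Q\mapsto Q\cap C$. On a homomorphism $R\to S$ the limit functor acts by the induced maps (a commutative subring of $R$ maps into a commutative subring of $S$). *)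

From HB Require Import structures.
From mathcomp Require Import all_boot all_order all_algebra.
Set Implicit Arguments.
Unset Strict Implicit.
Unset Printing Implicit Defensive.
Import GRing.Theory.
Local Open Scope ring_scope.

(* Rings are unital, possibly zero rings: pzRingType.  Homomorphisms are
   unital ring morphisms: {rmorphism R -> S}.  Subsets are Prop predicates. *)

Section Defs.
Variable R : pzRingType.

Definition partial_ideal (I : R -> Prop) : Prop :=
  I 0 /\
  forall a b : R, a * b = b * a ->
    (I a -> I b -> I (a + b)) /\ (I b -> I (a * b)).

Definition prime_partial_ideal (I : R -> Prop) : Prop :=
  partial_ideal I /\ ~ (forall x, I x) /\
  forall x y : R, x * y = y * x -> I (x * y) -> I x \/ I y.

Definition pspec := {P : R -> Prop | prime_partial_ideal P}.

Definition comm_subring (C : R -> Prop) : Prop :=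
  [/\ C 1,
      (forall x y, C x -> C y -> C (x - y)),
      (forall x y, C x -> C y -> C (x * y)) &
      (forall x y, C x -> C y -> x * y = y * x)].

Definition csub := {C : R -> Prop | comm_subring C}.

Definition prime_ideal_of (C Q : R -> Prop) : Prop :=
  (forall x, Q x -> C x) /\
  [/\ Q 0,
      (forall x y, Q x -> Q y -> Q (x + y)),
      (forall c x, C c -> Q x -> Q (c * x)),
      ~ (forall x, C x -> Q x) &
      (forall x y, C x -> C y -> Q (x * y) -> Q x \/ Q y)].

(* lim_{C in C(R)^op} Spec(C): compatible families, with transition maps
   Spec(C') -> Spec(C), Q |-> Q \cap C for C \subseteq C'. *)
Definition plim :=
  {Q : csub -> (R -> Prop) |
     (forall C : csub, prime_ideal_of (sval C) (Q C)) /\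
     (forall C C' : csub, (forall x, sval C x -> sval C' x) ->
        forall x, (Q C' x /\ sval C x) <-> Q C x)}.

Definition csub_top_subproof (HR : forall x y : R, x * y = y * x) :
  comm_subring (fun _ => True).
Proof. by split. Qed.

End Defs.

Arguments csub_top_subproof {R}.

Definition csub_top (R : comPzRingType) : csub R :=
  exist _ (fun _ => True) (csub_top_subproof (@mulrC R)).

Section Maps.
Variables (R S : pzRingType) (f : {rmorphism R -> S}).

Lemma pspec_map_subproof (P : pspec S) :
  prime_partial_ideal (fun x : R => sval P (f x)).
Proof.
case: P => P /= [[P0 Pid] [Pne Pprime]].
have comm a b : a * b = b * a -> f a * f b = f b * f a.
  by move=> e; rewrite -!rmorphM e.
split; [split|split].
- by rewrite rmorph0.
- move=> a b /comm /Pid [HD HM]; split.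
  + by move=> ha hb; rewrite rmorphD; apply: HD.
  + by move=> hb; rewrite rmorphM; apply: HM.
- move=> Hall; apply: Pne => y.
  have := Hall 1; rewrite rmorph1 => P1.
  have [_ HM] : _ /\ _ := Pid y 1 ltac:(by rewrite mulr1 mul1r).
  by have := HM P1; rewrite mulr1.
- move=> x y /comm e; rewrite rmorphM; exact: Pprime.
Qed.

Definition pspec_map (P : pspec S) : pspec R :=
  exist _ _ (pspec_map_subproof P).

Lemma img_csub_subproof (C : csub R) :
  comm_subring (fun y : S => exists2 x, sval C x & f x = y).
Proof.
case: C => C [C1 CB CM Cc] /=; split.
- by exists 1 => //; rewrite rmorph1.
- by move=> _ _ [x hx <-] [y hy <-]; exists (x - y); [apply: CB|rewrite rmorphB].
- by move=> _ _ [x hx <-] [y hy <-]; exists (x * y); [apply: CM|rewrite rmorphM].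
- by move=> _ _ [x hx <-] [y hy <-]; rewrite -!rmorphM Cc.
Qed.

Definition img_csub (C : csub R) : csub S := exist _ _ (img_csub_subproof C).

(* action of the limit functor on underlying families:
   (Q_D)_{D in C(S)} |-> (f|_C^{-1}(Q_{f(C)}))_{C in C(R)} *)
Definition plim_map_fam (Q : csub S -> (S -> Prop)) : csub R -> (R -> Prop) :=
  fun C x => sval C x /\ Q (img_csub C) (f x).

End Maps.

From HB Require Import structures.
From mathcomp Require Import all_boot all_order all_algebra.
From Stdlib Require Import FunctionalExtensionality PropExtensionality ProofIrrelevance.
Import GRing.Theory.
Local Open Scope ring_scope.

(* A prime partial ideal P restricts to a prime ideal C ∩ P of every
   commutative subring C, compatibly with inclusions.  Conversely a compatible
   family (Q_C) is recovered as the union of its members: two commuting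
   elements always lie in a common commutative subring D (their bicommutant),
   and compatibility moves every member Q_C to Q_D along C ∩ D, so the axioms
   of a prime partial ideal for the union reduce to those of the prime ideal
   Q_D.  Naturality holds because f^-1(P) ∩ C = f^-1(P ∩ f(C)) ∩ C. *)

Section PartialSpectrumAsLimit.
Variable R : pzRingType.

Lemma csub0 (C : csub R) : sval C 0.
Proof. by case: C => C [C1 CB _ _] /=; rewrite -(subrr 1); apply: CB. Qed.

Lemma csub_comm (C : csub R) x y : sval C x -> sval C y -> GRing.comm x y.
Proof. by case: C => C [_ _ _ Cc] /=; apply: Cc. Qed.

Lemma csubI_subproof (C D : csub R) :
  comm_subring (fun x => sval C x /\ sval D x).
Proof.
case: C => C [C1 CB CM Cc]; case: D => D [D1 DB DM _] /=; split => //.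
- by move=> x y [? ?] [? ?]; split; [apply: CB|apply: DB].
- by move=> x y [? ?] [? ?]; split; [apply: CM|apply: DM].
- by move=> x y [? ?] [? ?]; apply: Cc.
Qed.

Definition csubI (C D : csub R) : csub R := exist _ _ (csubI_subproof C D).

Definition bicommutant (X : R -> Prop) : R -> Prop :=
  fun z => forall w, (forall y, X y -> GRing.comm w y) -> GRing.comm z w.

Lemma bicommutant_sub (X : R -> Prop) y : X y -> bicommutant X y.
Proof. by move=> Xy w Xw; rewrite /GRing.comm Xw. Qed.

Lemma bicommutant_comm_subring (X : R -> Prop) :
  (forall a b, X a -> X b -> GRing.comm a b) -> comm_subring (bicommutant X).
Proof.
move=> commX; split.
- by move=> w _; rewrite /GRing.comm mul1r mulr1.
- by move=> x y Bx By w Xw; rewrite /GRing.comm mulrBl mulrBr Bx // By.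
- by move=> x y Bx By w Xw; rewrite /GRing.comm -mulrA By // mulrA Bx // mulrA.
- by move=> x y Bx By; apply: Bx => z Xz; apply: By => u Xu; apply: commX.
Qed.

Section CommutingPair.
Context {a b : R} (ab : GRing.comm a b).

Lemma pair_comm x y : x = a \/ x = b -> y = a \/ y = b -> GRing.comm x y.
Proof. by move=> [->|->] [->|->] //; rewrite /GRing.comm ab. Qed.

Definition csub_pair : csub R :=
  exist _ _ (@bicommutant_comm_subring (fun x => x = a \/ x = b) pair_comm).

Lemma csub_pairl : sval csub_pair a.
Proof. by apply: bicommutant_sub; left. Qed.

Lemma csub_pairr : sval csub_pair b.
Proof. by apply: bicommutant_sub; right. Qed.

Lemma csub_pairM : sval csub_pair (a * b).
Proof.
case: (proj2_sig csub_pair) => _ _ CM _.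
by apply: CM; [apply: csub_pairl|apply: csub_pairr].
Qed.

End CommutingPair.

Definition csub_elt (x : R) : csub R := csub_pair (erefl (x * x)).

Lemma plim_prime (Q : plim R) (C : csub R) : prime_ideal_of (sval C) (sval Q C).
Proof. exact: (proj1 (proj2_sig Q)). Qed.

Lemma plim_sub (Q : plim R) (C : csub R) x : sval Q C x -> sval C x.
Proof. by case: (plim_prime Q C) => + _; apply. Qed.

Lemma plim_transfer (Q : plim R) (C D : csub R) x :
  sval Q C x -> sval D x -> sval Q D x.
Proof.
move=> QCx Dx; have compat := proj2 (proj2_sig Q).
have CDC z : sval (csubI C D) z -> sval C z by case.
have CDD z : sval (csubI C D) z -> sval D z by case.
have QCDx : sval Q (csubI C D) x.
  by apply: (compat _ _ CDC x).1; do !split=> //; apply: plim_sub QCx.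
by have [] := (compat _ _ CDD x).2 QCDx.
Qed.

Lemma prime_ideal_of_restrict (P : pspec R) (C : csub R) :
  prime_ideal_of (sval C) (fun x => sval C x /\ sval P x).
Proof.
have C0 := csub0 C; have Cc := @csub_comm C.
case: P => P [[P0 Pid] [Pne Ppr]]; case: C C0 Cc => C [C1 CB CM _] /= C0 Cc.
split; first by move=> x [].
split => //.
- move=> x y [Cx Px] [Cy Py]; split; last exact: (Pid x y (Cc _ _ Cx Cy)).1.
  by rewrite -[y]opprK; apply: (CB) => //; rewrite -sub0r; apply: CB.
- move=> c x Cc' [Cx Px]; split; first exact: CM.
  exact: (Pid c x (Cc _ _ Cc' Cx)).2.
- move=> Call; apply: Pne => y; have [_ P1] := Call 1 C1.
  by have := (Pid y 1 (commr1 y)).2 P1; rewrite mulr1.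
- by move=> x y Cx Cy [_ Pxy]; case: (Ppr x y (Cc _ _ Cx Cy) Pxy); [left|right].
Qed.

Lemma restrict_compatible (P : pspec R) (C C' : csub R) :
  (forall x, sval C x -> sval C' x) ->
  forall x, ((sval C' x /\ sval P x) /\ sval C x) <-> (sval C x /\ sval P x).
Proof. by move=> CC' x; split=> [[[]]|[Cx Px]]; do ?split=> //; apply: CC'. Qed.

Definition pspec_to_plim (P : pspec R) : plim R :=
  exist _ _ (conj (prime_ideal_of_restrict P) (restrict_compatible P)).

Lemma plim_union_partial_ideal (Q : plim R) :
  partial_ideal (fun x => exists C, sval Q C x).
Proof.
split.
  by exists (csub_elt 0); case: (plim_prime Q (csub_elt 0)) => _ [].
move=> a b ab; have := plim_prime Q (csub_pair ab).
move=> [_ [_ QD QM _ _]]; split.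
- move=> [C QCa] [C' QC'b]; exists (csub_pair ab); apply: QD.
  + exact: plim_transfer QCa (csub_pairl ab).
  + exact: plim_transfer QC'b (csub_pairr ab).
- move=> [C QCb]; exists (csub_pair ab); apply: QM; first exact: csub_pairl.
  exact: plim_transfer QCb (csub_pairr ab).
Qed.

Lemma plim_union_prime (Q : plim R) :
  prime_partial_ideal (fun x => exists C, sval Q C x).
Proof.
split; first exact: plim_union_partial_ideal.
split.
- move=> Qall; have [C QC1] := Qall 1.
  have [_ [_ _ QM Qne _]] := plim_prime Q C.
  by apply: Qne => c Cc; have := QM c 1 Cc QC1; rewrite mulr1.
- move=> x y xy [C QCxy]; have [_ [_ _ _ _ Qpr]] := plim_prime Q (csub_pair xy).
  have := Qpr x y (csub_pairl xy) (csub_pairr xy).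
  case=> [|QD|QD]; [exact: plim_transfer QCxy (csub_pairM xy)|left|right];
    by exists (csub_pair xy).
Qed.

Definition plim_to_pspec (Q : plim R) : pspec R :=
  exist _ _ (plim_union_prime Q).

Lemma sig_fun_ext (T B : Type) (Pr : (T -> B) -> Prop) (X Y : {f | Pr f}) :
  sval X =1 sval Y -> X = Y.
Proof.
move=> XY; apply: eq_sig_hprop => [f|]; first exact: proof_irrelevance.
exact: functional_extensionality.
Qed.

Lemma pspec_to_plimK : cancel pspec_to_plim plim_to_pspec.
Proof.
move=> P; apply: sig_fun_ext => x /=; apply: propositional_extensionality.
split=> [[C [_ Px]] //|Px].
by exists (csub_elt x); split=> //; apply: csub_pairl.
Qed.

Lemma plim_to_pspecK : cancel plim_to_pspec pspec_to_plim.
Proof.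
move=> Q; apply: sig_fun_ext => C /=.
apply: functional_extensionality => x; apply: propositional_extensionality.
split=> [[Cx [D QDx]]|QCx]; first exact: plim_transfer QDx Cx.
by split; [apply: plim_sub QCx|exists C].
Qed.

Lemma pspec_to_plim_bij : bijective pspec_to_plim.
Proof. exact: Bijective pspec_to_plimK plim_to_pspecK. Qed.

End PartialSpectrumAsLimit.

Theorem proposition2p14 :
  exists phi : forall R : pzRingType, pspec R -> plim R,
    (* each component is a bijection *)
    (forall R : pzRingType, bijective (phi R)) /\
    (* naturality: lim(f) o phi_S = phi_R o \partial Spec(f) *)
    (forall (R S : pzRingType) (f : {rmorphism R -> S}) (P : pspec S)
            (C : csub R) (x : R),
        sval (phi R (pspec_map f P)) C x <->
        plim_map_fam f (sval (phi S P)) C x) /\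
    (* compatibility with \partial Spec|_CommRing = Spec: for commutative R,
       composing phi_R with the limit projection to the top C = R gives P |-> P *)
    (forall (R : comPzRingType) (P : pspec R) (x : R),
        sval (phi R P) (csub_top R) x <-> sval P x).
Proof.
exists pspec_to_plim; split; first exact: pspec_to_plim_bij.
split.
- move=> R S f P C x; rewrite /plim_map_fam /=.
  by split=> [[Cx Pfx]|[Cx [_ Pfx]]]; do ?split=> //; exists x.
- by move=> R P x /=; split=> [[]|].
Qed.
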